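(* For a category $\mathbb{X}$ with finite products, $\overline{\mathcal{D}}[\mathbb{X}]$ is a category, i.e. composition $\ast$ of pre-$\mathsf{D}$-sequences is associative and $i_\bullet$ is a two-sided unit.
   Context: Composition in diagrammatic order. $\mathsf{P}(A)=A\times A$, $\mathsf{P}(f)=f\times f$. A pre-$\mathsf{D}$-sequence $f_\bullet:A\to B$ is $(f_0,f_1,\dots)$ with $f_n:\mathsf{P}^n(A)\to B$. The tangent $\mathsf{T}(f_\bullet):\mathsf{P}(A)\to\mathsf{P}(B)$ is the pre-$\mathsf{D}$-sequence $\mathsf{T}(f_\bullet)_n=\langle\mathsf{P}^n(\pi_0)f_n,f_{n+1}\rangle$, with $\pi_0:\mathsf{P}(A)\to A$; $\mathsf{T}^n$ is its $n$-fold iterate, so $\mathsf{T}^n(f_\bullet)_0:\mathsf{P}^n(A)\to\mathsf{P}^n(B)$. $\overline{\mathcal{D}}[\mathbb{X}]$ has the objects of $\mathbb{X}$, pre-$\mathsf{D}$-sequences as maps, identity $i_\bullet:A\to A$ with $i_0=1_A$, $i_n=\pi_1\pi_1\cdots\pi_1:\mathsf{P}^n(A)\to A$ ($n$ projections), and composition $(f_\bullet\ast g_\bullet)_n=\mathsf{T}^n(f_\bullet)_0\,g_n$. *)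

Set Implicit Arguments.
Unset Strict Implicit.

(* A category; composition in DIAGRAMMATIC order: comp f g = "f then g". *)
Record Category := {
  ob : Type;
  hom : ob -> ob -> Type;
  comp : forall {A B C : ob}, hom A B -> hom B C -> hom A C;
  idm : forall A : ob, hom A A;
  comp_id_l : forall A B (f : hom A B), comp (idm A) f = f;
  comp_id_r : forall A B (f : hom A B), comp f (idm B) = f;
  comp_assoc : forall A B C D (f : hom A B) (g : hom B C) (h : hom C D),
      comp (comp f g) h = comp f (comp g h)
}.

Arguments comp {c A B C} _ _.
Arguments idm {c} A.

Record FPCategory := {
  cat :> Category;
  term : ob cat;
  bang : forall A : ob cat, hom A term;
  bang_uniq : forall A (f : hom A term), f = bang A;
  prodo : ob cat -> ob cat -> ob cat;
  pi0 : forall A B, hom (prodo A B) A;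
  pi1 : forall A B, hom (prodo A B) B;
  pair : forall {C A B}, hom C A -> hom C B -> hom C (prodo A B);
  pair_pi0 : forall C A B (f : hom C A) (g : hom C B), comp (pair f g) (pi0 A B) = f;
  pair_pi1 : forall C A B (f : hom C A) (g : hom C B), comp (pair f g) (pi1 A B) = g;
  pair_uniq : forall C A B (f : hom C A) (g : hom C B) (h : hom C (prodo A B)),
      comp h (pi0 A B) = f -> comp h (pi1 A B) = g -> h = pair f g
}.

Arguments pi0 {f0} A B.
Arguments pi1 {f0} A B.
Arguments pair {f0 C A B} _ _.
Arguments prodo {f0} _ _.

Section DSeq.
Variable X : FPCategory.

Definition Pob (A : ob X) : ob X := prodo A A.
Definition Pmap {A B : ob X} (f : hom A B) : hom (Pob A) (Pob B) :=
  pair (comp (pi0 A A) f) (comp (pi1 A A) f).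

Fixpoint Pn (n : nat) (A : ob X) : ob X :=
  match n with 0 => A | S m => Pn m (Pob A) end.
Fixpoint Pnmap (n : nat) {A B : ob X} : hom A B -> hom (Pn n A) (Pn n B) :=
  match n with 0 => fun f => f | S m => fun f => Pnmap m (Pmap f) end.

Definition preD (A B : ob X) : Type := forall n : nat, hom (Pn n A) B.

Definition Tan {A B : ob X} (f : preD A B) : preD (Pob A) (Pob B) :=
  fun n => pair (comp (Pnmap n (pi0 A A)) (f n)) (f (S n)).

Fixpoint Tn (n : nat) {A B : ob X} (f : preD A B) : preD (Pn n A) (Pn n B) :=
  match n with 0 => f | S m => Tn m (Tan f) end.

(* identity i_0 = 1_A, i_n = pi1 pi1 ... pi1 (n projections, diagrammatic);
   recursively i_{n+1}^A = i_n^{PA} ; pi1_A *)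
Fixpoint idD_n (n : nat) (A : ob X) : hom (Pn n A) A :=
  match n with 0 => idm A | S m => comp (idD_n m (Pob A)) (pi1 A A) end.
Definition idD (A : ob X) : preD A A := fun n => idD_n n A.

Definition compD {A B C : ob X} (f : preD A B) (g : preD B C) : preD A C :=
  fun n => comp (Tn n f 0) (g n).

End DSeq.

Arguments Pob {X} A.
Arguments Pn {X} n A.
Arguments preD {X} A B.
Arguments Tan {X A B} f.
Arguments Tn {X} n {A B} f.
Arguments idD {X} A.
Arguments compD {X A B C} f g.

(* A pair of maps (a, b) intertwines two pre-D-sequences g and f when
   g_k ; b = P^k(a) ; f_k for all k.  The tangent preserves intertwining, and
   T(f) is intertwined with f by the first projections; this naturality of
   T^n(f)_0 in P^n(pi0) is exactly what makes T a functor on pre-D-sequences,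
   T(f * g) = T(f) * T(g) and T(i) = i.  Associativity then follows by
   unfolding (f * g) * h once, and the unit laws from i_n = pi1 ... pi1. *)
From Corelib Require Import ssreflect.
Set Implicit Arguments.
Unset Strict Implicit.

Section DSequences.
Variable X : FPCategory.

Lemma comp_pair (D C A B : ob X) (h : hom D C) (x : hom C A) (y : hom C B) :
  comp h (pair x y) = pair (comp h x) (comp h y).
Proof. by apply: pair_uniq; rewrite comp_assoc ?pair_pi0 ?pair_pi1. Qed.

Lemma pair_Pmap (C A B : ob X) (x y : hom C A) (b : hom A B) :
  comp (pair x y) (Pmap b) = pair (comp x b) (comp y b).
Proof. by rewrite /Pmap comp_pair -!comp_assoc pair_pi0 pair_pi1. Qed.

Lemma Pmap_comp (A B C : ob X) (x : hom A B) (y : hom B C) :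
  Pmap (comp x y) = comp (Pmap x) (Pmap y).
Proof. by rewrite {2}/Pmap pair_Pmap !comp_assoc. Qed.

Lemma Pnmap_comp (n : nat) (A B C : ob X) (x : hom A B) (y : hom B C) :
  Pnmap n (comp x y) = comp (Pnmap n x) (Pnmap n y).
Proof. by elim: n A B C x y => [|n IH] A B C x y //=; rewrite Pmap_comp IH. Qed.

Lemma Pmap_pi0 (A B : ob X) (a : hom A B) :
  comp (Pmap a) (pi0 B B) = comp (pi0 A A) a.
Proof. exact: pair_pi0. Qed.

Lemma Pmap_pi1 (A B : ob X) (a : hom A B) :
  comp (Pmap a) (pi1 B B) = comp (pi1 A A) a.
Proof. exact: pair_pi1. Qed.

Definition intertwines (A' B' A B : ob X) (a : hom A' A) (b : hom B' B)
    (g : preD A' B') (f : preD A B) : Prop :=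
  forall k, comp (g k) b = comp (Pnmap k a) (f k).

Lemma intertwines_Tan (A' B' A B : ob X) (a : hom A' A) (b : hom B' B)
    (g : preD A' B') (f : preD A B) :
  intertwines a b g f -> intertwines (Pmap a) (Pmap b) (Tan g) (Tan f).
Proof.
  move=> Hgf k; rewrite /Tan pair_Pmap comp_pair (Hgf (S k)).
  by rewrite comp_assoc Hgf -!comp_assoc -!Pnmap_comp Pmap_pi0.
Qed.

Lemma intertwines_Tn (n : nat) (A' B' A B : ob X) (a : hom A' A) (b : hom B' B)
    (g : preD A' B') (f : preD A B) :
  intertwines a b g f ->
  intertwines (Pnmap n a) (Pnmap n b) (Tn n g) (Tn n f).
Proof.
  elim: n A' B' A B a b g f => [|n IH] A' B' A B a b g f Hgf //=.
  exact/IH/intertwines_Tan.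
Qed.

Lemma intertwines_Tan_pi0 (A B : ob X) (f : preD A B) :
  intertwines (pi0 A A) (pi0 B B) (Tan f) f.
Proof. move=> k; exact: pair_pi0. Qed.

Lemma intertwines_idD (A' A : ob X) (a : hom A' A) :
  intertwines a a (idD A') (idD A).
Proof.
  move=> k; rewrite /idD; elim: k A' A a => [|k IH] A' A a /=.
    by rewrite comp_id_l comp_id_r.
  by rewrite comp_assoc -Pmap_pi1 -comp_assoc IH comp_assoc.
Qed.

Lemma Tan_ext (A B : ob X) (f g : preD A B) :
  (forall k, f k = g k) -> forall k, Tan f k = Tan g k.
Proof. by move=> Hfg k; rewrite /Tan !Hfg. Qed.

Lemma Tn_ext (n : nat) (A B : ob X) (f g : preD A B) :
  (forall k, f k = g k) -> forall k, Tn n f k = Tn n g k.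
Proof.
  elim: n A B f g => [|n IH] A B f g Hfg //=.
  exact/IH/Tan_ext.
Qed.

Lemma Tan_compD (A B C : ob X) (f : preD A B) (g : preD B C) k :
  Tan (compD f g) k = compD (Tan f) (Tan g) k.
Proof.
  rewrite /compD {1 3}/Tan comp_pair -!comp_assoc.
  by rewrite -(intertwines_Tn k (intertwines_Tan_pi0 f) 0).
Qed.

Lemma Tn_compD (n : nat) (A B C : ob X) (f : preD A B) (g : preD B C) k :
  Tn n (compD f g) k = compD (Tn n f) (Tn n g) k.
Proof.
  elim: n A B C f g k => [|n IH] A B C f g k //=.
  by rewrite (Tn_ext n (Tan_compD f g)) IH.
Qed.

Lemma Tan_idD (A : ob X) k : Tan (idD A) k = idD (Pob A) k.
Proof. by symmetry; apply: pair_uniq; first exact: intertwines_idD. Qed.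

Lemma Tn_idD (n : nat) (A : ob X) k : Tn n (idD A) k = idD (Pn n A) k.
Proof.
  elim: n A k => [|n IH] A k //=.
  by rewrite (Tn_ext n (Tan_idD A)) IH.
Qed.

Lemma Tn0_idD (n : nat) (A B : ob X) (f : preD A B) :
  comp (Tn n f 0) (idD B n) = f n.
Proof.
  rewrite /idD; elim: n A B f => [|n IH] A B f /=; first exact: comp_id_r.
  by rewrite -comp_assoc IH; apply: pair_pi1.
Qed.

Lemma compD_assoc (A B C D : ob X) (f : preD A B) (g : preD B C) (h : preD C D) n :
  compD (compD f g) h n = compD f (compD g h) n.
Proof. by rewrite {1 3}/compD Tn_compD comp_assoc. Qed.

Lemma compD_id_l (A B : ob X) (f : preD A B) n : compD (idD A) f n = f n.
Proof. by rewrite /compD Tn_idD comp_id_l. Qed.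

Lemma compD_id_r (A B : ob X) (f : preD A B) n : compD f (idD B) n = f n.
Proof. exact: Tn0_idD. Qed.

End DSequences.

Theorem proposition3p7 (X : FPCategory) :
  (forall (A B C D : ob X) (f : preD A B) (g : preD B C) (h : preD C D) (n : nat),
      compD (compD f g) h n = compD f (compD g h) n)
  /\ (forall (A B : ob X) (f : preD A B) (n : nat),
      compD (idD A) f n = f n /\ compD f (idD B) n = f n).
Proof.
  split; first exact: compD_assoc.
  by move=> A B f n; split; [exact: compD_id_l | exact: compD_id_r].
Qed.
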